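(* There exists a gadget $H$ (in the sense defined in the context) among whose half-edges are three distinguished half-edges $e_1,e_2,e_3$, such that: (a) $\rho(v)\le 1$ and $\delta(v)\le 1$ for every vertex $v$ of $H$; (b) for every assignment in which each of $e_1,e_2,e_3$ is directed either toward its endpoint in $H$ or away from it, with at least one of them directed toward its endpoint, there exists an orientation of $H$ extending this assignment; (c) there is no orientation of $H$ in which all three of $e_1,e_2,e_3$ are directed away from their endpoints in $H$.
   Context: A gadget $H$ consists of a finite simple graph with vertex set $V(H)$ and edge set $E(H)$, a finite set of ''half-edges'' (unfinished edges), each attached to exactly one vertex of $V(H)$ (its endpoint), and prescribed functions $\rho,\delta,\theta: V(H)\to\mathbb{Z}_{\ge 0}$ with $\rho(v)+\delta(v)+\theta(v)$ equal to the number of edges and half-edges incident to $v$. An orientation of $H$ assigns to each edge of $E(H)$ either one of its two directions or ''undirected'', and to each half-edge either ''directed toward its endpoint'', ''directed away from its endpoint'', or ''undirected'', such that each vertex $v$ has exactly $\rho(v)$ incident edges/half-edges directed into $v$, exactly $\delta(v)$ directed out of $v$, and exactly $\theta(v)$ undirected. Half-edges other than $e_1,e_2,e_3$ are unconstrained in an orientation. *)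

From HB Require Import structures.
From mathcomp Require Import all_boot.
Set Implicit Arguments. Unset Strict Implicit. Unset Printing Implicit Defensive.

(* State of an edge/half-edge as seen from a vertex:
   Tow = directed toward that vertex, Away = directed away, Und = undirected. *)
Inductive dir := Tow | Away | Und.

Definition dir_eqb (a b : dir) : bool :=
  match a, b with
  | Tow, Tow | Away, Away | Und, Und => true
  | _, _ => false
  end.

Lemma dir_eqP : Equality.axiom dir_eqb.
Proof. by case; case; constructor. Qed.

HB.instance Definition _ := hasDecEq.Build dir dir_eqP.

Definition dopp (a : dir) : dir :=
  match a with Tow => Away | Away => Tow | Und => Und end.

Record gadget := Gadget {
  gV : finType;
  gE : rel gV;
  gHalf : finType;
  gend : gHalf -> gV;
  grho : gV -> nat;
  gdelta : gV -> nat;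
  gtheta : gV -> nat;
  gsym : symmetric gE;
  girr : irreflexive gE;
  gdeg : forall v, grho v + gdelta v + gtheta v
                   = #|[pred u | gE v u]| + #|[pred h | gend h == v]|
}.

Definition dcount (H : gadget) (eo : gV H -> gV H -> dir) (ho : gHalf H -> dir)
  (v : gV H) (d : dir) : nat :=
  #|[pred u | gE v u && (eo v u == d)]| + #|[pred h | (gend h == v) && (ho h == d)]|.

(* An orientation: eo v u is the state of edge vu as seen from v
   (Tow = directed into v); consistency eo u v = dopp (eo v u) on edges.
   ho h is the state of half-edge h (Tow = toward its endpoint). *)
Definition is_orientation (H : gadget) (eo : gV H -> gV H -> dir)
  (ho : gHalf H -> dir) : Prop :=
  (forall u v : gV H, gE u v -> eo v u = dopp (eo u v)) /\
  (forall v, dcount eo ho v Tow = grho v /\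
             dcount eo ho v Away = gdelta v /\
             dcount eo ho v Und = gtheta v).

Definition dir_of_bool (b : bool) : dir := if b then Tow else Away.

From HB Require Import structures.
From mathcomp Require Import all_boot.

(* The gadget is the star K_{1,3}: a centre joined to three leaves, each
   leaf carrying two half-edges, one of which is the distinguished e_i.
   The centre has rho = 1, delta = 0, theta = 2; every leaf has
   rho = delta = theta = 1.  Hence rho, delta <= 1 everywhere.

   Impossibility (c): if every e_i points away from its leaf, each leaf has
   used up its single outgoing slot, so no edge can leave a leaf towards the
   centre; but the centre needs one incoming edge and has no half-edges.

   Extension (b): if e_k points towards its leaf, direct the edge from leaf k
   into the centre, leave the other edges undirected, make the spare
   half-edge at leaf k undirected and at every other leaf j direct it
   opposite to e_j. *)

Section OrientationCounts.

Variables (H : gadget) (eo : gV H -> gV H -> dir) (ho : gHalf H -> dir).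

Lemma dcount_witness (v : gV H) (d : dir) :
  0 < dcount eo ho v d ->
  (exists u, gE v u /\ eo v u = d) \/ (exists h, gend h = v /\ ho h = d).
Proof.
rewrite /dcount addn_gt0 => /orP[/card_gt0P[u] | /card_gt0P[h]].
- by rewrite inE => /andP[vu /eqP euv]; left; exists u.
- by rewrite inE => /andP[/eqP hv /eqP hh]; right; exists h.
Qed.

Lemma dcount_edge_half (v u : gV H) (h : gHalf H) (d : dir) :
  gE v u -> eo v u = d -> gend h = v -> ho h = d -> 1 < dcount eo ho v d.
Proof.
move=> vu euv hv hh; rewrite /dcount -addn1 leq_add //; apply/card_gt0P.
- by exists u; rewrite inE vu euv eqxx.
- by exists h; rewrite inE hv hh !eqxx.
Qed.

End OrientationCounts.

Lemma card_pred_count (T : finType) (s : seq T) (P : pred T) :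
  uniq s -> (forall x, x \in s) -> #|[pred x | P x]| = count P s.
Proof.
move=> s_uniq s_full; rewrite cardE /enum_mem size_filter -enumT.
by apply/permP/uniq_perm; rewrite ?enum_uniq // => x; rewrite mem_enum s_full.
Qed.

(* Leaves are indexed by a three-element type, vertices are the centre
   [None] and the leaves [Some l]; half-edge (l, true) is e_l and (l, false)
   the spare half-edge at leaf l. *)
Definition leaf := option bool.
Definition star_vertex := option leaf.
Definition star_half := (leaf * bool)%type.

Definition star_edge (u v : star_vertex) : bool := (u == None) != (v == None).
Definition star_end (h : star_half) : star_vertex := Some h.1.
Definition star_rho (v : star_vertex) : nat := 1.
Definition star_delta (v : star_vertex) : nat := if v is Some _ then 1 else 0.
Definition star_theta (v : star_vertex) : nat := if v is Some _ then 1 else 2.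

Lemma star_edge_sym : symmetric star_edge.
Proof. by move=> u v; rewrite /star_edge eq_sym. Qed.

Lemma star_edge_irr : irreflexive star_edge.
Proof. by move=> u; rewrite /star_edge eqxx. Qed.

Definition star_vertices : seq star_vertex :=
  [:: None; Some None; Some (Some true); Some (Some false)].
Definition star_halves : seq star_half :=
  [seq (l, b) | l <- [:: None; Some true; Some false], b <- [:: true; false]].

Lemma card_star_vertex (P : pred star_vertex) :
  #|[pred x | P x]| = count P star_vertices.
Proof. by apply: card_pred_count => // - [[[]|]|]. Qed.

Lemma card_star_half (P : pred star_half) :
  #|[pred x | P x]| = count P star_halves.
Proof. by apply: card_pred_count => // - [[[]|] []]. Qed.

Lemma star_degree (v : star_vertex) :
  star_rho v + star_delta v + star_theta v
  = #|[pred u | star_edge v u]| + #|[pred h | star_end h == v]|.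
Proof. by rewrite card_star_vertex card_star_half; case: v => [[[]|]|]. Qed.

Definition star : gadget :=
  Gadget star_edge_sym star_edge_irr star_degree.

Definition distinguished (l : leaf) : gHalf star := (l, true).

Lemma star_rho_delta_le1 (v : gV star) : grho v <= 1 /\ gdelta v <= 1.
Proof. by case: v. Qed.

Lemma star_no_all_away (eo : gV star -> gV star -> dir) (ho : gHalf star -> dir) :
  is_orientation eo ho -> (forall l, ho (distinguished l) = Away) -> False.
Proof.
move=> [eo_sym counts] away.
have [centre_in _] := counts None.
have [] := @dcount_witness star eo ho None Tow; first by rewrite centre_in.
- (* the incoming edge comes from a leaf l, which it leaves *)
  move=> [[l|] [cl eo_cl]] //.
  have eo_lc : eo (Some l) None = Away by rewrite (eo_sym _ _ cl) eo_cl.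
  have [_ [leaf_out _]] := counts (Some l).
  have := @dcount_edge_half star eo ho (Some l) None (distinguished l) Away
            isT eo_lc erefl (away l).
  by rewrite leaf_out.
- (* the centre carries no half-edge *)
  by move=> [[l b] []].
Qed.

Definition star_eo (k : leaf) (u v : star_vertex) : dir :=
  if (u == None) && (v == Some k) then Tow
  else if (v == None) && (u == Some k) then Away else Und.

Definition star_ho (b : leaf -> bool) (k : leaf) (h : star_half) : dir :=
  if h.2 then dir_of_bool (b h.1)
  else if h.1 == k then Und else dopp (dir_of_bool (b h.1)).

Lemma star_orientation (b : leaf -> bool) (k : leaf) :
  b k -> @is_orientation star (star_eo k) (star_ho b k).
Proof.
move=> bk; split; first by case: k bk => [[]|] _ [[[]|]|] [[[]|]|].
move=> v; rewrite /dcount !card_star_vertex !card_star_half.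
move: bk; case: k => [[]|]; case: v => [[[]|]|]; rewrite /star_ho /star_eo /=;
  by case: (b None); case: (b (Some true)); case: (b (Some false)).
Qed.

Definition assign (b1 b2 b3 : bool) (l : leaf) : bool :=
  match l with None => b1 | Some true => b2 | Some false => b3 end.

Lemma assign_true (b1 b2 b3 : bool) :
  b1 || b2 || b3 -> exists k, assign b1 b2 b3 k.
Proof.
by case: b1; [exists None | case: b2; [exists (Some true) | exists (Some false)]].
Qed.

Theorem lemma5 :
  exists (H : gadget) (e1 e2 e3 : gHalf H),
    [/\ e1 != e2, e1 != e3 & e2 != e3] /\
    (forall v : gV H, grho v <= 1 /\ gdelta v <= 1) /\
    (forall b1 b2 b3 : bool, b1 || b2 || b3 ->
       exists eo ho, is_orientation eo ho /\
         ho e1 = dir_of_bool b1 /\ ho e2 = dir_of_bool b2 /\ ho e3 = dir_of_bool b3) /\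
    ~ (exists eo ho, is_orientation eo ho /\
         ho e1 = Away /\ ho e2 = Away /\ ho e3 = Away).
Proof.
exists star, (distinguished None), (distinguished (Some true)),
  (distinguished (Some false)).
split; first by [].
split; first exact: star_rho_delta_le1.
split.
  move=> b1 b2 b3 /assign_true[k bk].
  exists (star_eo k), (star_ho (assign b1 b2 b3) k).
  by split; first exact: star_orientation.
case=> eo [ho [orient [away1 [away2 away3]]]].
by apply: (star_no_all_away _ _ orient); case=> [[]|].
Qed.
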